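(* For procedure $\mathcal{G}_{APL}(p,\mathrm{lb},\beta,\theta)$, run with any $\alpha_k\in(0,1]$ and with $\mathrm{lb}\le f^*$, the following hold: (a) $\{X'_k\}_{k\ge0}$ is a sequence of localizers of $\mathcal{L}_f(l)$; (b) $\underline f_0\le\underline f_1\le\cdots\le\underline f_k\le f^*$ and $\overline f_0\ge\overline f_1\ge\cdots\ge\overline f_k\ge f^*$ for any $k\ge1$; (c) the problem defining $x_k$ in Step 2 is always feasible unless the procedure terminates; (d) $\emptyset\ne\underline X_k\subseteq\overline X_k$ for any $k\ge1$, so Step 4 is always feasible unless the procedure terminates; (e) whenever the procedure terminates, $f(p^+)-\mathrm{lb}^+\le q\,[f(p)-\mathrm{lb}]$, where $q\equiv q(\beta,\theta):=1-(1-\theta)\min\{\beta,1-\beta\}$.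
   Context: Problem: $f^*=\min_{x\in X}f(x)$, $X\subseteq\mathbb{R}^n$ nonempty convex compact, $\mathbb{R}^n$ with an arbitrary norm $\|\cdot\|$; $f:X\to\mathbb{R}$ convex with oracle returning $f(x)$ and $f'(x)\in\partial f(x)$; $h(z,x):=f(z)+\langle f'(z),x-z\rangle$; $\mathcal{L}_f(l):=\{x\in X:f(x)\le l\}$; a localizer of $\mathcal{L}_f(l)$ is a convex compact set $X'$ with $\mathcal{L}_f(l)\subseteq X'\subseteq X$. $\omega:X\to\mathbb{R}$ is a prox-function: differentiable and strongly convex with modulus $\sigma_\omega>0$, i.e. $\langle\nabla\omega(x)-\nabla\omega(z),x-z\rangle\ge\sigma_\omega\|x-z\|^2$ on $X$. Procedure $\mathcal{G}_{APL}(p,\mathrm{lb},\beta,\theta)$ ($p\in X$, $\beta,\theta\in(0,1)$, given $\alpha_k\in(0,1]$): Step 0: $x^u_0=p$, $\overline f_0=f(p)$, $\underline f_0=\mathrm{lb}$, $l=\beta\underline f_0+(1-\beta)\overline f_0$; choose $x_0\in X$ and an initial localizer $X'_0$ of $\mathcal{L}_f(l)$ (e.g. $x_0=p$, $X'_0=X$); $d_\omega(x)=\omega(x)-[\omega(x_0)+\langle\nabla\omega(x_0),x-x_0\rangle]$; $k=1$. Step 1: $x^l_k=(1-\alpha_k)x^u_{k-1}+\alpha_kx_{k-1}$, $\underline h_k=\min_{x\in X'_{k-1}}h(x^l_k,x)$ ($+\infty$ if infeasible), $\underline f_k=\max\{\underline f_{k-1},\min\{l,\underline h_k\}\}$; if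 $\underline f_k\ge l-\theta(l-\underline f_0)$ terminate with $p^+=x^u_{k-1}$, $\mathrm{lb}^+=\underline f_k$. Step 2: $x_k=\operatorname{argmin}_{x\in X'_{k-1}}\{d_\omega(x):h(x^l_k,x)\le l\}$. Step 3: $\overline f_k=\min\{\overline f_{k-1},f(\alpha_kx_k+(1-\alpha_k)x^u_{k-1})\}$, choose $x^u_k$ with $f(x^u_k)=\overline f_k$; if $\overline f_k\le l+\theta(\overline f_0-l)$ terminate with $p^+=x^u_k$, $\mathrm{lb}^+=\underline f_k$. Step 4: choose a closed convex set $X'_k$ with $\underline X_k\subseteq X'_k\subseteq\overline X_k$, where $\underline X_k:=\{x\in X'_{k-1}:h(x^l_k,x)\le l\}$ and $\overline X_k:=\{x\in X:\langle\nabla d_\omega(x_k),x-x_k\rangle\ge0\}$. Step 5: $k\leftarrow k+1$, go to Step 1. *)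

From HB Require Import structures.
From mathcomp Require Import all_boot all_order all_algebra.
From mathcomp Require Import all_classical all_reals all_analysis.
Set Implicit Arguments. Unset Strict Implicit. Unset Printing Implicit Defensive.
Import Order.TTheory GRing.Theory Num.Theory.
Import numFieldNormedType.Exports.
Local Open Scope classical_set_scope.
Local Open Scope ring_scope.

Section APL.
Context {R : realType} {n : nat}.
Local Notation V := 'rV[R]_n.

Definition dot (u v : V) : R := \sum_(i < n) u ord0 i * v ord0 i.

Definition is_norm (N : V -> R) : Prop :=
  [/\ forall x, 0 <= N x, forall x, N x = 0 -> x = 0,
      forall (a : R) x, N (a *: x) = `|a| * N x
    & forall x y, N (x + y) <= N x + N y].

Definition cvx_set (A : set V) : Prop :=
  forall x y (t : R), A x -> A y -> 0 <= t <= 1 -> A (t *: x + (1 - t) *: y).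

Definition convex_on (A : set V) (f : V -> R) : Prop :=
  forall x y (t : R), A x -> A y -> 0 <= t <= 1 ->
    f (t *: x + (1 - t) *: y) <= t * f x + (1 - t) * f y.

Definition subgrad_oracle (A : set V) (f : V -> R) (f' : V -> V) : Prop :=
  forall x y, A x -> A y -> f x + dot (f' x) (y - x) <= f y.

Definition hcut (f : V -> R) (f' : V -> V) (z x : V) : R := f z + dot (f' z) (x - z).

Definition level (A : set V) (f : V -> R) (l : R) : set V := [set x | A x /\ f x <= l].

Definition localizer (A : set V) (f : V -> R) (l : R) (X' : set V) : Prop :=
  [/\ cvx_set X', compact X', level A f l `<=` X' & X' `<=` A].

Definition prox_function (A : set V) (N : V -> R) (w : V -> R) (gw : V -> V)
  (sigma : R) : Prop :=
  [/\ 0 < sigma,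
      forall x, A x -> differentiable w x /\ forall u, 'd w x u = dot (gw x) u
    & forall x z, A x -> A z -> sigma * N (x - z) ^+ 2 <= dot (gw x - gw z) (x - z)].

Definition fstar (A : set V) (f : V -> R) : R := inf [set f x | x in A].

Definition d_omega (w : V -> R) (gw : V -> V) (x0 x : V) : R :=
  w x - (w x0 + dot (gw x0) (x - x0)).
Definition grad_d_omega (gw : V -> V) (x0 x : V) : V := gw x - gw x0.

Definition qfactor (beta theta : R) : R := 1 - (1 - theta) * Num.min beta (1 - beta).

(* A trace of the procedure G_APL: the successive values of
   x^l_k, x_k, x^u_k, underline f_k, overline f_k, X'_k. *)
Record apl_trace := APLTrace {
  xl : nat -> V; xs : nat -> V; xu : nat -> V;
  flo : nat -> R; fup : nat -> R; Xp : nat -> set V }.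

Variables (X : set V) (f : V -> R) (f' : V -> V) (w : V -> R) (gw : V -> V)
  (p : V) (lb beta theta : R) (alpha : nat -> R) (T : apl_trace).

(* level l = beta * underline f_0 + (1 - beta) * overline f_0 *)
Definition apl_level : R := beta * lb + (1 - beta) * f p.
Local Notation l := apl_level.

Definition apl_init : Prop :=
  [/\ xu T 0 = p, fup T 0 = f p, flo T 0 = lb, X (xs T 0) & localizer X f l (Xp T 0)].

(* v = min{l, min_{x in A} h(z, x)}, with min over the empty set = +infinity *)
Definition min_l_h (A : set V) (z : V) (v : R) : Prop :=
  (A = set0 /\ v = l) \/
  (exists y0, [/\ A y0, forall y, A y -> hcut f f' z y0 <= hcut f f' z y
                      & v = Num.min l (hcut f f' z y0)]).

(* Step 1 of iteration k (k >= 1), before the termination test *)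
Definition apl_step1 (k : nat) : Prop :=
  xl T k = (1 - alpha k) *: xu T k.-1 + alpha k *: xs T k.-1 /\
  exists v, min_l_h (Xp T k.-1) (xl T k) v /\ flo T k = Num.max (flo T k.-1) v.

Definition apl_term1 (k : nat) : Prop := l - theta * (l - flo T 0) <= flo T k.

Definition ulX (k : nat) : set V := [set x | Xp T k.-1 x /\ hcut f f' (xl T k) x <= l].
Definition olX (k : nat) : set V :=
  [set x | X x /\ 0 <= dot (grad_d_omega gw (xs T 0) (xs T k)) (x - xs T k)].

Definition apl_step2 (k : nat) : Prop :=
  ulX k (xs T k) /\ forall y, ulX k y -> d_omega w gw (xs T 0) (xs T k) <= d_omega w gw (xs T 0) y.

Definition apl_step3 (k : nat) : Prop :=
  [/\ fup T k = Num.min (fup T k.-1) (f (alpha k *: xs T k + (1 - alpha k) *: xu T k.-1)),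
      X (xu T k) & f (xu T k) = fup T k].

Definition apl_term3 (k : nat) : Prop := fup T k <= l + theta * (fup T 0 - l).

Definition apl_step4 (k : nat) : Prop :=
  [/\ closed (Xp T k), cvx_set (Xp T k), ulX k `<=` Xp T k & Xp T k `<=` olX k].

Definition apl_full_iter (k : nat) : Prop :=
  [/\ apl_step1 k, ~ apl_term1 k, apl_step2 k, apl_step3 k & ~ apl_term3 k /\ apl_step4 k].

Definition apl_completed (K : nat) : Prop :=
  apl_init /\ forall k, (0 < k <= K)%N -> apl_full_iter k.

End APL.

From HB Require Import structures.
From mathcomp Require Import all_boot all_order all_algebra.
From mathcomp Require Import all_classical all_reals all_analysis.
From mathcomp Require Import ring lra.
Import Order.TTheory GRing.Theory Num.Theory.
Import numFieldNormedType.Exports.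
Local Open Scope classical_set_scope.
Local Open Scope ring_scope.

(* Outside the level set L_f(l) the level l is below f,
   and inside it, hence inside the localizer X'_(k-1), the cutting plane is
   below f; so by induction flo_k <= f^*, while fup_k is a value of f.  The
   set underline X_k is a convex cut of X'_(k-1) on which x_k minimizes the
   Bregman distance d_omega, so the first-order optimality condition places it
   inside the half-space overline X_k, and X'_k is again a localizer.  The
   gap contraction follows from the termination tests and the identities
   l - lb = (1 - beta) (f p - lb) and f p - l = beta (f p - lb). *)

Section InnerProduct.
Context {R : realType} {n : nat}.
Implicit Types (u v x y : 'rV[R]_n).

Lemma dotDr u x y : dot u (x + y) = dot u x + dot u y.
Proof. by rewrite /dot -big_split; apply: eq_bigr => i _; rewrite mxE mulrDr. Qed.

Lemma dotZr u a x : dot u (a *: x) = a * dot u x.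
Proof. by rewrite /dot mulr_sumr; apply: eq_bigr => i _; rewrite mxE mulrCA. Qed.

Lemma dotNr u x : dot u (- x) = - dot u x.
Proof. by rewrite -scaleN1r dotZr mulN1r. Qed.

Lemma dotBr u x y : dot u (x - y) = dot u x - dot u y.
Proof. by rewrite dotDr dotNr. Qed.

Lemma dotDl u v x : dot (u + v) x = dot u x + dot v x.
Proof. by rewrite /dot -big_split; apply: eq_bigr => i _; rewrite mxE mulrDl. Qed.

Lemma dotNl u x : dot (- u) x = - dot u x.
Proof. by rewrite /dot -sumrN; apply: eq_bigr => i _; rewrite mxE mulNr. Qed.

Lemma dotBl u v x : dot (u - v) x = dot u x - dot v x.
Proof. by rewrite dotDl dotNl. Qed.

Lemma coord_le_norm x i : `|x ord0 i| <= `|x|.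
Proof.
have -> : `|x| = mx_norm x by [].
by rewrite mx_normE -[leLHS]nngE num_le; exact: (le_bigmax _ _ (ord0, i)).
Qed.

Lemma dot_lbounded_compact c {A : set 'rV[R]_n} : compact A ->
  exists M : R, forall x, A x -> - M <= dot c x.
Proof.
move=> /compact_bounded [M0 [_ HM]].
exists ((M0 + 1) * \sum_(i < n) `|c ord0 i|) => x Ax.
have x_le : `|x| <= M0 + 1 by apply: (HM (M0 + 1)); [rewrite ltrDl|].
have : `|dot c x| <= (M0 + 1) * \sum_(i < n) `|c ord0 i|.
  apply: le_trans (ler_norm_sum _ _ _) _.
  rewrite mulr_sumr; apply: ler_sum => i _.
  by rewrite normrM mulrC ler_wpM2r //; apply: le_trans (coord_le_norm _ _) x_le.
by rewrite ler_norml => /andP[].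
Qed.

End InnerProduct.

Section ConvexAnalysis.
Context {R : realType} {n : nat}.
Local Notation V := 'rV[R]_n.

Lemma subgrad_has_lbound {A : set V} {f : V -> R} {f' : V -> V} {p : V} :
  compact A -> A p -> subgrad_oracle A f f' -> has_lbound [set f x | x in A].
Proof.
move=> kA Ap sg; have [M HM] := dot_lbounded_compact (f' p) kA.
exists (f p - M - dot (f' p) p) => _ [x Ax <-].
by have := sg p x Ap Ax; have := HM x Ax; rewrite dotBr; lra.
Qed.

Lemma le_fstar (A : set V) (f : V -> R) (a : R) :
  A !=set0 -> (forall x, A x -> a <= f x) -> a <= fstar A f.
Proof.
move=> [x0 Ax0] Ha; apply: lb_le_inf; first by exists (f x0), x0.
by move=> _ [x Ax <-]; apply: Ha.
Qed.

Lemma hcut_convex_comb (f : V -> R) (f' : V -> V) z x y (t : R) :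
  hcut f f' z (t *: x + (1 - t) *: y) = t * hcut f f' z x + (1 - t) * hcut f f' z y.
Proof. by rewrite /hcut !dotBr dotDr !dotZr; ring. Qed.

Lemma cvx_set_hcut_sublevel {A : set V} {f : V -> R} {f' : V -> V} {z : V} {c : R} :
  cvx_set A -> cvx_set [set x | A x /\ hcut f f' z x <= c].
Proof.
move=> cA x y t [Ax hx] [Ay hy] /andP[t0 t1]; split; first by apply: cA => //; apply/andP.
rewrite hcut_convex_comb.
have : t * hcut f f' z x <= t * c by rewrite ler_wpM2l.
have : (1 - t) * hcut f f' z y <= (1 - t) * c by rewrite ler_wpM2l // subr_ge0.
lra.
Qed.

(* Variational inequality for minimizing w - <c, .> over a convex set: a negative
   directional derivative at the minimizer would give a better nearby point. *)
Lemma cvx_argmin_grad_ge0 (A : set V) (w : V -> R) (g c xs x : V) :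
  cvx_set A -> A xs -> A x -> differentiable w xs -> (forall u, 'd w xs u = dot g u) ->
  (forall y, A y -> w xs - dot c xs <= w y - dot c y) ->
  0 <= dot (g - c) (x - xs).
Proof.
move=> cA Axs Ax dw dwE xs_min; rewrite leNgt; apply/negP => neg.
set v := x - xs.
have dcvg : (fun h : R => h^-1 *: ((w \o shift xs) (h *: v) - w xs)) @ 0^' --> 'D_v w xs.
  exact: diff_derivable.
rewrite deriveE // dwE in dcvg.
have dlt : dot g v < dot c v by rewrite -subr_lt0 -dotBl.
have near_lt := cvgr_lt _ dcvg _ dlt.
have : \forall h \near (0:R)^'+, [/\ 0 < h, h < 1 &
     h^-1 *: ((w \o shift xs) (h *: v) - w xs) < dot c v].
  near=> h; split.
  - by near: h; exact: nbhs_right_gt.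
  - by near: h; exact: nbhs_right_lt.
  - near: h; move: near_lt; rewrite /dnbhs /= !near_withinE => H.
    by apply: filterS (H _) => h Hh h0; apply: Hh; rewrite /= gt_eqF.
move=> /filter_ex [h [h0 h1]] /=; rewrite [_ *: _]mulrC ltr_pdivrMr // => quot_lt.
have Ay : A (h *: v + xs).
  have -> : h *: v + xs = h *: x + (1 - h) *: xs.
    by rewrite /v scalerBr scalerBl scale1r addrAC addrA.
  by apply: cA => //; rewrite !ltW.
have := xs_min _ Ay; rewrite dotDr dotZr.
by move: quot_lt; rewrite mulrC; lra.
Unshelve. all: by end_near.
Qed.

Lemma d_omega_argmin_grad_ge0 (A : set V) (w : V -> R) (gw : V -> V) x0 xs x :
  cvx_set A -> A xs -> A x -> differentiable w xs ->
  (forall u, 'd w xs u = dot (gw xs) u) ->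
  (forall y, A y -> d_omega w gw x0 xs <= d_omega w gw x0 y) ->
  0 <= dot (grad_d_omega gw x0 xs) (x - xs).
Proof.
move=> cA Axs Ax dw dwE xs_min; rewrite /grad_d_omega.
apply: (cvx_argmin_grad_ge0 _ _ _ (gw x0) _ _ cA Axs Ax dw dwE) => y Ay.
by have := xs_min y Ay; rewrite /d_omega !dotBr; lra.
Qed.

Lemma qfactor_ge {beta theta b d : R} : theta <= 1 -> 0 <= d ->
  b = beta \/ b = 1 - beta -> (1 - (1 - theta) * b) * d <= qfactor beta theta * d.
Proof.
move=> theta1 d0 b_eq; rewrite ler_wpM2r // lerD2l lerN2 ler_wpM2l ?subr_ge0 //.
by case: b_eq => ->; rewrite ge_min lexx ?orbT.
Qed.

End ConvexAnalysis.

Section APLProcedure.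
Context {R : realType} {n : nat}.
Local Notation V := 'rV[R]_n.
Context {X : set V} {f : V -> R} {f' : V -> V} {w : V -> R} {gw : V -> V}.
Context {p : V} {lb beta theta : R} {alpha : nat -> R} {T : @apl_trace R n}.

Hypotheses (cX : cvx_set X) (kX : compact X) (sg : subgrad_oracle X f f') (pX : X p).
Hypotheses (beta01 : 0 < beta < 1) (theta01 : 0 < theta < 1).
Hypotheses (alpha01 : forall k, (0 < k)%N -> 0 < alpha k <= 1) (lb_fstar : lb <= fstar X f).

Local Notation l := (apl_level f p lb beta).
Local Notation run := (apl_completed X f f' w gw p lb beta theta alpha T).
Local Notation step1 := (apl_step1 f f' p lb beta alpha T).
Local Notation term1 := (apl_term1 f p lb beta theta T).
Local Notation step2 := (apl_step2 f f' w gw p lb beta T).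
Local Notation step3 := (apl_step3 X f alpha T).
Local Notation term3 := (apl_term3 f p lb beta theta T).
Local Notation ulX := (ulX f f' p lb beta T).
Local Notation olX := (olX X gw T).

Lemma fstar_le x : X x -> fstar X f <= f x.
Proof. by move=> Xx; apply: (ge_inf (subgrad_has_lbound kX pX sg)); exists x. Qed.

Lemma lb_le_fp : lb <= f p.
Proof. exact: le_trans lb_fstar (fstar_le _ pX). Qed.

Lemma level_sub_lb : l - lb = (1 - beta) * (f p - lb).
Proof. by rewrite /apl_level; ring. Qed.

Lemma lb_le_level : lb <= l.
Proof.
rewrite -subr_ge0 level_sub_lb mulr_ge0 // subr_ge0 ?lb_le_fp //.
by case/andP: beta01 => _ /ltW.
Qed.

Lemma apl_flo_le_next {k} : step1 k -> flo T k.-1 <= flo T k.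
Proof. by case=> _ [v [_ ->]]; rewrite le_max lexx. Qed.

Lemma apl_xl_in k : (0 < k)%N -> step1 k -> X (xu T k.-1) -> X (xs T k.-1) -> X (xl T k).
Proof.
move=> k0 [-> _] Xu Xs; have /andP[a0 a1] := alpha01 k k0.
have := cX _ _ (1 - alpha k) Xu Xs; rewrite opprB addrCA subrr addr0.
by apply; apply/andP; split; lra.
Qed.

Lemma apl_flo_le_f k : step1 k -> X (xl T k) -> level X f l `<=` Xp T k.-1 ->
  (forall x, X x -> flo T k.-1 <= f x) -> forall x, X x -> flo T k <= f x.
Proof.
move=> [_ [v [v_def ->]]] Xxl lev flo_prev x Xx; rewrite ge_max flo_prev //=.
have [fx_le|lt_fx] := leP (f x) l.
- have Xpx : Xp T k.-1 x by apply: lev.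
  case: v_def => [[E _]|[y0 [_ y0_min ->]]]; first by rewrite E in Xpx.
  by rewrite ge_min (le_trans (y0_min _ Xpx)) ?orbT //; exact: sg.
- by case: v_def => [[_ ->]|[y0 [_ _ ->]]]; rewrite ?ge_min ltW ?orTb.
Qed.

Lemma apl_ulX_neq0 k : flo T 0 = lb -> step1 k -> ~ term1 k -> ulX k !=set0.
Proof.
move=> flo0 [_ [v [v_def flo_k]]] no_term.
have flo_lt : flo T k < l.
  rewrite ltNge; apply: contra_notN no_term => l_le; apply: le_trans l_le.
  rewrite flo0 gerDl oppr_le0 mulr_ge0 ?subr_ge0 ?lb_le_level //.
  by case/andP: theta01 => /ltW.
have v_lt : v < l by apply: le_lt_trans flo_lt; rewrite flo_k le_max lexx orbT.
case: v_def v_lt => [[_ ->]|[y0 [Ay0 _ ->]]]; first by rewrite ltxx.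
by rewrite gt_min ltxx /= => h_lt; exists y0; split => //; apply: ltW.
Qed.

Lemma apl_localizer_next k : localizer X f l (Xp T k.-1) -> X (xl T k) ->
  apl_step4 X f f' gw p lb beta T k -> localizer X f l (Xp T k).
Proof.
move=> [_ _ lev _] Xxl [closed_k cvx_k ul_sub sub_ol].
have sub_X : Xp T k `<=` X by move=> x /sub_ol [].
split=> //; first exact: subclosed_compact closed_k kX sub_X.
move=> x [Xx fx]; apply: ul_sub; split; first by apply: lev.
by apply: le_trans fx; exact: sg.
Qed.

Definition apl_invariant k :=
  [/\ localizer X f l (Xp T k), X (xu T k), X (xs T k), f (xu T k) = fup T k &
      [/\ forall x, X x -> flo T k <= f x, fup T k <= f p & lb <= flo T k]].

Lemma apl_invariant0 : apl_init X f p lb beta T -> apl_invariant 0.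
Proof.
rewrite /apl_invariant; case=> -> -> -> Xs0 loc0; split=> //; split=> //.
by move=> x Xx; apply: le_trans lb_fstar (fstar_le _ Xx).
Qed.

Lemma apl_invariant_next k : apl_invariant k ->
  apl_full_iter X f f' w gw p lb beta theta alpha T k.+1 -> apl_invariant k.+1.
Proof.
move=> [loc Xu Xs _ [flo_le fup_le lb_le]] [S1 _ [ul_xs _] [fup_def Xu' fu'] [_ S4]].
have Xxl : X (xl T k.+1) by apply: apl_xl_in.
have [_ _ lev sub_X] := loc.
split=> //.
- exact: apl_localizer_next.
- by apply: sub_X; case: ul_xs.
split.
- exact: apl_flo_le_f.
- by rewrite fup_def ge_min fup_le.
- exact: le_trans lb_le (apl_flo_le_next S1).
Qed.

Lemma apl_invariant_run {K k} : run K -> (k <= K)%N -> apl_invariant k.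
Proof.
move=> [init iter]; elim: k => [_|k IH kK]; first exact: apl_invariant0.
by apply: apl_invariant_next (IH (ltnW kK)) _; apply: iter.
Qed.

Lemma apl_localizers K : run K -> forall k, (k <= K)%N -> localizer X f l (Xp T k).
Proof. by move=> rK k kK; case: (apl_invariant_run rK kK). Qed.

Lemma apl_flo_monotone K : run K -> step1 K.+1 ->
  (forall k, (k <= K)%N -> flo T k <= flo T k.+1) /\ flo T K.+1 <= fstar X f.
Proof.
move=> rK S1; split.
  move=> k; rewrite leq_eqVlt => /orP[/eqP -> | kK]; first exact: (apl_flo_le_next S1).
  by case: (rK.2 k.+1 kK) => /apl_flo_le_next.
have [[_ _ lev _] Xu Xs _ [flo_le _ _]] := apl_invariant_run rK (leqnn K).
apply: le_fstar; first by exists p.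
by apply: apl_flo_le_f => //; apply: apl_xl_in.
Qed.

Lemma apl_fup_monotone K : run K -> step3 K.+1 ->
  (forall k, (k <= K)%N -> fup T k.+1 <= fup T k) /\ fstar X f <= fup T K.+1.
Proof.
move=> rK S3; split; last by case: S3 => _ Xu <-; apply: fstar_le.
move=> k; rewrite leq_eqVlt => /orP[/eqP -> | kK].
  by case: S3 => -> _ _; rewrite ge_min lexx.
by case: (rK.2 k.+1 kK) => _ _ _ [-> _ _] _; rewrite ge_min lexx.
Qed.

Lemma apl_step2_feasible K : run K -> step1 K.+1 -> ~ term1 K.+1 -> ulX K.+1 !=set0.
Proof. by move=> [[_ _ flo0 _ _] _]; apply: apl_ulX_neq0. Qed.

Hypothesis w_diff :
  forall x, X x -> differentiable w x /\ forall u, 'd w x u = dot (gw x) u.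

Lemma apl_ulX_sub_olX K : run K -> step2 K.+1 -> ulX K.+1 `<=` olX K.+1.
Proof.
move=> rK [ul_xs xs_min] x ul_x.
have [[cvx_loc _ _ sub_X] _ _ _ _] := apl_invariant_run rK (leqnn K).
have [dw dwE] := w_diff _ (sub_X _ ul_xs.1).
split; first exact: sub_X ul_x.1.
exact: d_omega_argmin_grad_ge0 (cvx_set_hcut_sublevel cvx_loc) ul_xs ul_x dw dwE xs_min.
Qed.

Lemma apl_gap_term1 K : run K -> term1 K.+1 ->
  f (xu T K) - flo T K.+1 <= qfactor beta theta * (f p - lb).
Proof.
move=> rK term; have [_ _ _ fu [_ fup_le _]] := apl_invariant_run rK (leqnn K).
case: rK term => [[_ _ flo0 _ _] _]; rewrite /apl_term1 flo0 => term.
have theta1 : theta <= 1 by case/andP: theta01 => _ /ltW.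
have gap0 : 0 <= f p - lb by rewrite subr_ge0 lb_le_fp.
apply: le_trans (qfactor_ge theta1 gap0 (or_intror erefl)).
by move: term; rewrite fu /apl_level; lra.
Qed.

Lemma apl_gap_term3 K : run K -> step1 K.+1 -> step3 K.+1 -> term3 K.+1 ->
  f (xu T K.+1) - flo T K.+1 <= qfactor beta theta * (f p - lb).
Proof.
move=> rK S1 [_ _ ->] term.
have [_ _ _ _ [_ _ lb_le]] := apl_invariant_run rK (leqnn K).
have lb_flo := le_trans lb_le (apl_flo_le_next S1).
case: rK term => [[_ fup0 _ _ _] _]; rewrite /apl_term3 fup0 => term.
have theta1 : theta <= 1 by case/andP: theta01 => _ /ltW.
have gap0 : 0 <= f p - lb by rewrite subr_ge0 lb_le_fp.
apply: le_trans (qfactor_ge theta1 gap0 (or_introl erefl)).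
by move: term; rewrite /apl_level; lra.
Qed.

End APLProcedure.

Theorem lemma3p2 (R : realType) (n : nat) (N : 'rV[R]_n -> R) (X : set 'rV[R]_n)
  (f : 'rV[R]_n -> R) (f' : 'rV[R]_n -> 'rV[R]_n)
  (w : 'rV[R]_n -> R) (gw : 'rV[R]_n -> 'rV[R]_n) (sigma : R)
  (p : 'rV[R]_n) (lb beta theta : R) (alpha : nat -> R) (T : @apl_trace R n) :
  is_norm N -> X !=set0 -> cvx_set X -> compact X ->
  convex_on X f -> subgrad_oracle X f f' -> prox_function X N w gw sigma ->
  X p -> 0 < beta < 1 -> 0 < theta < 1 ->
  (forall k, (0 < k)%N -> 0 < alpha k <= 1) ->
  lb <= fstar X f ->
  let l := apl_level f p lb beta in
  let run K := apl_completed X f f' w gw p lb beta theta alpha T K in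
  let step1 k := apl_step1 f f' p lb beta alpha T k in
  let term1 k := apl_term1 f p lb beta theta T k in
  let step2 k := apl_step2 f f' w gw p lb beta T k in
  let step3 k := apl_step3 X f alpha T k in
  let term3 k := apl_term3 f p lb beta theta T k in
  (* (a) X'_k are localizers of L_f(l) *)
  [/\ (forall K, run K -> forall k, (k <= K)%N -> localizer X f l (Xp T k)),
  (* (b) monotonicity of the lower and upper bounds *)
      (forall K, run K -> step1 K.+1 ->
         (forall k, (k <= K)%N -> flo T k <= flo T k.+1) /\ flo T K.+1 <= fstar X f) /\
      (forall K, run K -> step1 K.+1 -> ~ term1 K.+1 -> step2 K.+1 -> step3 K.+1 ->
         (forall k, (k <= K)%N -> fup T k.+1 <= fup T k) /\ fstar X f <= fup T K.+1),
  (* (c) Step 2 is feasible unless the procedure terminates *)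
      (forall K, run K -> step1 K.+1 -> ~ term1 K.+1 ->
         ulX f f' p lb beta T K.+1 !=set0),
  (* (d) nonempty underline X_k contained in overline X_k *)
      (forall K, run K -> step1 K.+1 -> ~ term1 K.+1 -> step2 K.+1 ->
         ulX f f' p lb beta T K.+1 !=set0 /\
         ulX f f' p lb beta T K.+1 `<=` olX X gw T K.+1)
  & (* (e) contraction of the gap upon termination *)
      (forall K, run K -> step1 K.+1 -> term1 K.+1 ->
         f (xu T K) - flo T K.+1 <= qfactor beta theta * (f p - lb)) /\
      (forall K, run K -> step1 K.+1 -> ~ term1 K.+1 -> step2 K.+1 -> step3 K.+1 ->
         term3 K.+1 ->
         f (xu T K.+1) - flo T K.+1 <= qfactor beta theta * (f p - lb))].
Proof.
move=> _ _ cX kX _ sg [_ w_diff _] pX beta01 theta01 alpha01 lb_fstar.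
move=> l run step1 term1 step2 step3 term3.
split.
- exact: apl_localizers.
- split; first exact: apl_flo_monotone.
  by move=> K rK _ _ _; move: rK; apply: apl_fup_monotone.
- exact: apl_step2_feasible.
- move=> K rK S1 no_term S2; split; first by move: rK S1 no_term; apply: apl_step2_feasible.
  by move: rK S2; apply: apl_ulX_sub_olX.
- split; first by move=> K rK _; move: rK; apply: apl_gap_term1.
  by move=> K rK S1 _ _; move: rK S1; apply: apl_gap_term3.
Qed.
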